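(* Let $\rho$ be a state on $\mathbb{C}^M\otimes\mathbb{C}^N$, fix an orthonormal basis $\{|f_n\rangle\}$ of $\mathbb{C}^N$ and a positive integer $K$ such that $\rho$ admits a decomposition into $K$ rank-one terms. The following are equivalent: (a) $\rho$ is $K$-separable; (b) there is an orthonormal basis $\{|e_m\rangle\}$ of $\mathbb{C}^M$ such that for every decomposition $\rho=\sum_{l=1}^K|\Phi_l\rangle\langle\Phi_l|$, with Gram vectors $w''_{mn}\in\mathbb{C}^K$, $w''^{\,l}_{mn}=\langle\Phi_l|e_m\otimes f_n\rangle$, there exist $K\times K$ matrices $M_{mk}$ ($m,k=1,\dots,M$), each normal and all pairwise commuting, such that $M_{mk}w''_{kn}=w''_{mn}$ for all $m,k\in\{1,\dots,M\}$, $n\in\{1,\dots,N\}$; (c) for some orthonormal basis $\{|e_m\rangle\}$ of $\mathbb{C}^M$ and some decomposition $\rho=\sum_{l=1}^K|\Phi_l\rangle\langle\Phi_l|$, there exist pairwise commuting normal $K\times K$ matrices $M_{mk}$ with $M_{mk}w''_{kn}=w''_{mn}$ for all $m,k,n$, where $w''_{mn}$ are defined as in (b).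
   Context: A state $\rho$ is $K$-separable if $\rho=\sum_{l=1}^K|\varphi_l\otimes\psi_l\rangle\langle\varphi_l\otimes\psi_l|$ for some vectors $|\varphi_l\rangle\in\mathbb{C}^M$, $|\psi_l\rangle\in\mathbb{C}^N$ (a decomposition into $K$ rank-one product terms). A matrix $X$ is normal if $XX^\dagger=X^\dagger X$. *)

From HB Require Import structures.
From mathcomp Require Import all_boot all_order all_algebra.
Set Implicit Arguments. Unset Strict Implicit. Unset Printing Implicit Defensive.
Import Order.TTheory GRing.Theory Num.Theory.
Local Open Scope ring_scope.

Section QDefs.
Variable C : numClosedFieldType.

Definition adjmx m n (A : 'M[C]_(m, n)) : 'M[C]_(n, m) := map_mx Num.conj A^T.

(* tensor product of column vectors: (phi (x) psi)_(mxvec_index i j) = phi_i psi_j *)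
Definition tensv M N (phi : 'cV[C]_M) (psi : 'cV[C]_N) : 'cV[C]_(M * N) :=
  (mxvec (phi *m psi^T))^T.

Definition proj1 n (v : 'cV[C]_n) : 'M[C]_n := v *m adjmx v.

Definition is_state n (rho : 'M[C]_n) : Prop :=
  [/\ adjmx rho = rho,
      forall v : 'cV[C]_n, 0 <= (adjmx v *m rho *m v) 0 0
    & \tr rho = 1].

Definition is_decomp n K (rho : 'M[C]_n) (Phi : 'I_K -> 'cV[C]_n) : Prop :=
  rho = \sum_(l < K) proj1 (Phi l).

Definition K_separable M N K (rho : 'M[C]_(M * N)) : Prop :=
  exists (phi : 'I_K -> 'cV[C]_M) (psi : 'I_K -> 'cV[C]_N),
    rho = \sum_(l < K) proj1 (tensv (phi l) (psi l)).

(* the columns of E form an orthonormal basis of C^n *)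
Definition is_onb n (E : 'M[C]_n) : Prop := adjmx E *m E = 1%:M.

Definition gramv M N K (Phi : 'I_K -> 'cV[C]_(M * N)) (E : 'M[C]_M) (F : 'M[C]_N)
  (m : 'I_M) (n : 'I_N) : 'cV[C]_K :=
  \col_(l < K) (adjmx (Phi l) *m tensv (col m E) (col n F)) 0 0.

Definition commuting_normal_cond M N K (Phi : 'I_K -> 'cV[C]_(M * N))
  (E : 'M[C]_M) (F : 'M[C]_N) : Prop :=
  exists Mx : 'I_M -> 'I_M -> 'M[C]_K,
    [/\ forall m k, Mx m k *m adjmx (Mx m k) = adjmx (Mx m k) *m Mx m k,
        forall m k m' k', Mx m k *m Mx m' k' = Mx m' k' *m Mx m k
      & forall m k n, Mx m k *m gramv Phi E F k n = gramv Phi E F m n].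

End QDefs.

From mathcomp Require Import all_boot all_order all_algebra.
Set Implicit Arguments. Unset Strict Implicit. Unset Printing Implicit Defensive.
Import Order.TTheory GRing.Theory Num.Theory Num.Def.
Local Open Scope ring_scope.
Local Open Scope sesquilinear_scope.

(* A decomposition rho = sum_l |Phi_l><Phi_l| is encoded by the matrix
   decomp_mx Phi whose columns are the Phi_l, so that rho is its Gram matrix.
   (a) => (b): if rho = sum_l |phi_l (x) psi_l><phi_l (x) psi_l|, pick an
   orthonormal basis E of C^M along which no nonzero phi_l has a vanishing
   coordinate (a generic rotation of a unitary without zero entries).  Every
   decomposition differs from the product one by a unitary U (unitary
   freedom), so its Gram vectors are U^t* applied to the vectors with
   entries <phi_l|e_m><psi_l|f_n>, and M_mk = U^t* diag(ratios) U works.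
   (b) => (c) is immediate.  (c) => (a): commuting normal matrices are
   simultaneously unitarily diagonalizable (Schur cotriangularization plus
   "triangular and normal implies diagonal"); after rotating the
   decomposition the relations M_mk w_kn = w_mn become scalar, and they say
   that every rotated vector has product coordinates on the basis e_m (x) f_n. *)

Section Adjoint.
Variable C : numClosedFieldType.

Lemma adjmxM m n p (A : 'M[C]_(m, n)) (B : 'M[C]_(n, p)) :
  (A *m B)^t* = B^t* *m A^t*.
Proof. by rewrite trmx_mul map_mxM. Qed.

Lemma adjmxD m n (A B : 'M[C]_(m, n)) : (A + B)^t* = A^t* + B^t*.
Proof. by rewrite linearD /= map_mxD. Qed.

Lemma adjmx0 m n : (0 : 'M[C]_(m, n))^t* = 0.
Proof. by rewrite trmx0 map_mx0. Qed.

Lemma unitarymx_tK n (U : 'M[C]_n) : U \is unitarymx -> U^t* *m U = 1%:M.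
Proof. by move=> /unitarymxP /mulmx1C. Qed.

Lemma gram_eq0 m n (A : 'M[C]_(m, n)) : A *m A^t* = 0 -> A = 0.
Proof.
move=> AA0; apply/matrixP => i j; rewrite mxE.
have /matrixP /(_ i i) := AA0; rewrite !mxE => /eqP.
rewrite psumr_eq0 => [/allP /(_ j (mem_index_enum _))|k _]; last first.
  by rewrite !mxE mul_conjC_ge0.
by rewrite /= !mxE mul_conjC_eq0 => /eqP.
Qed.

Lemma row_col_entry m n p (A : 'M[C]_(m, n)) (B : 'M[C]_(n, p)) i j :
  (row i A *m col j B) 0 0 = (A *m B) i j.
Proof. by rewrite !mxE; apply: eq_bigr => k _; rewrite !mxE. Qed.

Lemma row_adj m n (A : 'M[C]_(m, n)) (i : 'I_n) : row i (A^t*) = (col i A)^t*.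
Proof. by rewrite -map_row tr_col. Qed.

Lemma adj_col_entry m K (A : 'M[C]_(m, K)) (v : 'cV[C]_m) (k : 'I_K) :
  (A^t* *m v) k 0 = ((col k A)^t* *m v) 0 0.
Proof. by rewrite !mxE; apply: eq_bigr => i _; rewrite !mxE. Qed.

Lemma onb_coord m (E : 'M[C]_m) (c : 'cV[C]_m) i :
  E^t* *m E = 1%:M -> ((col i E)^t* *m (E *m c)) 0 0 = c i 0.
Proof. by move=> EE; rewrite -adj_col_entry mulmxA EE mul1mx. Qed.

Lemma dot_conj n (a b : 'cV[C]_n) : ((a^t* *m b) 0 0)^* = (b^t* *m a) 0 0.
Proof.
rewrite !mxE rmorph_sum; apply: eq_bigr => i _.
by rewrite !mxE rmorphM /= conjCK mulrC.
Qed.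

End Adjoint.

Section SimultaneousDiagonalization.
Variable C : numClosedFieldType.

Lemma normal_row_col_norm n (T : 'M[C]_n) j : T *m T^t* = T^t* *m T ->
  \sum_l `|T j l| ^+ 2 = \sum_i `|T i j| ^+ 2.
Proof.
move=> /matrixP /(_ j j); rewrite !mxE => Tjj.
transitivity (\sum_l T j l * (T^t*) l j).
  by apply: eq_bigr => l _; rewrite normCK !mxE.
by rewrite Tjj; apply: eq_bigr => i _; rewrite normCK !mxE mulrC.
Qed.

(* A (lower) triangular normal matrix is diagonal: by induction on j, row j
   vanishes off the diagonal, so by normality so does column j. *)
Lemma trig_normal_diag n (T : 'M[C]_n) :
  is_trig_mx T -> T *m T^t* = T^t* *m T -> is_diag_mx T.
Proof.
move=> /is_trig_mxP Ttrig Tnormal.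
have col_diag k (j : 'I_n) : (j < k)%N -> forall i, i != j -> T i j = 0.
  elim: k j => [//|k IH] j; rewrite ltnS leq_eqVlt => /predU1P[jk|]; last exact: IH.
  have row_diag l : l != j -> T j l = 0.
    move=> lj; case: (ltngtP j l) => [jl|lj'|/val_inj ej]; first exact: Ttrig.
      by apply: (IH l); [rewrite -jk | rewrite eq_sym].
    by rewrite ej eqxx in lj.
  have := normal_row_col_norm j Tnormal.
  rewrite (bigD1 j) //= big1 => [|l lj]; last by rewrite row_diag ?normr0 ?expr0n.
  rewrite [RHS](bigD1 j) //= => /addrI /esym /eqP.
  rewrite psumr_eq0 => [/allP offdiag i ij|i _]; last exact: exprn_ge0.
  by have := offdiag i (mem_index_enum _); rewrite ij expf_eq0 normr_eq0 => /eqP.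
apply/is_diag_mxP => i j; exact: (col_diag j.+1 j (ltnSn j)).
Qed.

(* Pairwise commuting normal matrices are simultaneously unitarily
   diagonalizable: cotriangularize them (Schur) and apply the lemma above. *)
Lemma simultaneous_unitary_diag n (As : seq 'M[C]_n) :
  {in As &, forall A B, comm_mx A B} ->
  {in As, forall A, A *m A^t* = A^t* *m A} ->
  exists2 P : 'M_n, P \is unitarymx &
    {in As, forall A, is_diag_mx (P *m A *m P^t*)}.
Proof.
move=> Acomm Anormal; have [P Pu /allP Ptrig] := cotrigonalization Acomm.
exists P => // A AAs; apply: trig_normal_diag.
  by have := Ptrig A AAs; rewrite /= /similar_to conjymx.
have PtP m (X : 'M_(m, n)) : X *m P^t* *m P = X.
  by rewrite -mulmxA unitarymx_tK // mulmx1.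
rewrite !adjmxM !trmxCK !mulmxA !PtP -!mulmxA; congr (_ *m _).
by rewrite !mulmxA Anormal.
Qed.

End SimultaneousDiagonalization.

Section UnitaryFreedom.
Variable C : numClosedFieldType.
Local Notation "B ^!" :=
  (orthomx conjC (mx_of_hermitian (hermitian1mx _)) B) : matrix_set_scope.

Lemma gram_ker n K p (Y Z : 'M[C]_(n, K)) (X : 'M[C]_(p, n)) :
  Y *m Y^t* = Z *m Z^t* -> X *m Y = 0 -> X *m Z = 0.
Proof.
move=> G XY; apply: gram_eq0.
by rewrite adjmxM !mulmxA -(mulmxA X) -G mulmxA XY !mul0mx.
Qed.

Lemma gram_rank n K (Y Z : 'M[C]_(n, K)) :
  Y *m Y^t* = Z *m Z^t* -> \rank Y = \rank Z.
Proof.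
move=> G.
have sYZ : (kermx Y <= kermx Z)%MS by apply/sub_kermxP/(gram_ker G)/mulmx_ker.
have sZY : (kermx Z <= kermx Y)%MS by apply/sub_kermxP/(gram_ker (esym G))/mulmx_ker.
have := mxrankS sYZ; have := mxrankS sZY; rewrite !mxrank_ker => le1 le2.
have e : (n - \rank Y = n - \rank Z)%N by apply/eqP; rewrite eqn_leq le1 le2.
by rewrite -(subKn (rank_leq_row Y)) e subKn // rank_leq_row.
Qed.

Lemma schmidt_ortho p K (V : 'M[C]_(p, K)) (W := schmidt (row_base V^!%MS)) :
  V *m W^t* = 0 /\ W *m W^t* = 1%:M.
Proof.
split; last by apply/unitarymxP/schmidt_unitarymx/rank_leq_col.
have : (W <= V^!%MS)%MS.
  by rewrite (eqmx_schmidt_free (row_base_free _)) eq_row_base.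
move/sub_kermxP; rewrite mul1mx => WV.
by have := congr1 (fun X => X^t*) WV; rewrite adjmxM trmxCK adjmx0.
Qed.

Section RowSpace.
Variables (K n : nat) (Y : 'M[C]_(n, K)).
Let R := schmidt (row_base Y).
Let W := schmidt (row_base Y^!%MS).

Lemma schmidt_resolution : R^t* *m R + W^t* *m W = 1%:M.
Proof.
have := mulmxKtV (1%:M : 'M_K) (schmidt_complete_unitarymx Y) (add_rank_ortho Y).
by rewrite mul1mx /schmidt_complete tr_col_mx map_row_mx mul_row_col.
Qed.

Lemma schmidt_proj : Y *m R^t* *m R = Y.
Proof.
have YR : (Y <= R)%MS by rewrite (submx_trans _ (schmidt_sub _)) // eq_row_base.
rewrite -[X in X *m _ *m _ = _](mulmxKpV YR) -(mulmxA _ R) (unitarymxP _).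
  by rewrite mulmx1 (mulmxKpV YR).
by rewrite /R; exact/schmidt_unitarymx/rank_leq_col.
Qed.

Lemma gram_partial_isometry (Z : 'M[C]_(n, K)) (T := pinvmx Y *m Z) :
  Y *m Y^t* = Z *m Z^t* -> Y *m T = Z /\ R *m T *m (R *m T)^t* = 1%:M.
Proof.
move=> G; have RY : (R <= Y)%MS.
  by rewrite (eqmx_schmidt_free (row_base_free _)) eq_row_base.
split.
  apply/eqP; rewrite mulmxA -subr_eq0 -{2}[Z]mul1mx -mulmxBl; apply/eqP/(gram_ker G).
  by rewrite mulmxBl mul1mx mulmxKpV ?subrr.
rewrite /T mulmxA; set RP := R *m pinvmx Y.
rewrite adjmxM !mulmxA -(mulmxA RP Z) -G mulmxA -(mulmxA (RP *m Y)) -adjmxM.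
by rewrite (mulmxKpV RY) (unitarymxP _) // /R; exact/schmidt_unitarymx/rank_leq_col.
Qed.

End RowSpace.

Lemma glue_unitary r s K (R S : 'M[C]_(r, K)) (W W' : 'M[C]_(s, K)) :
  R^t* *m R + W^t* *m W = 1%:M -> S *m S^t* = 1%:M -> W' *m W'^t* = 1%:M ->
  S *m W'^t* = 0 -> R^t* *m S + W^t* *m W' \is unitarymx.
Proof.
move=> RW SS W'W' SW'; have W'S : W' *m S^t* = 0.
  by rewrite -[W']trmxCK -adjmxM SW' adjmx0.
apply/unitarymxP; rewrite adjmxD !adjmxM !trmxCK mulmxDl !mulmxDr !mulmxA.
rewrite -!(mulmxA _ S) -!(mulmxA _ W') SS W'W' SW' W'S.
by rewrite !mulmx0 !mul0mx addr0 add0r !mulmx1.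
Qed.

(* Unitary freedom: two n x K matrices with the same Gram matrix differ by a
   K x K unitary: glue the isometry T on the row space of Y with any
   isometry between the orthogonal complements of the row spaces. *)
Lemma unitary_freedom n K (Y Z : 'M[C]_(n, K)) :
  Y *m Y^t* = Z *m Z^t* -> exists2 U : 'M_K, U \is unitarymx & Y *m U = Z.
Proof.
move=> G; pose R := schmidt (row_base Y).
have [YTZ RT] := gram_partial_isometry G; set T := pinvmx Y *m Z in YTZ RT.
have [YW _] := schmidt_ortho Y.
have [W' [ZW' W'W']] : exists W' : 'M_(\rank Y^!, K),
    Z *m W'^t* = 0 /\ W' *m W'^t* = 1%:M.
  have -> : \rank Y^! = \rank Z^! by rewrite !rank_ortho (gram_rank G).
  by exists (schmidt (row_base Z^!%MS)); apply: schmidt_ortho.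
have RTW' : R *m T *m W'^t* = 0.
  by rewrite /T -(mulmxA R) -(mulmxA _ Z) ZW' !mulmx0.
exists (R^t* *m (R *m T) + (schmidt (row_base Y^!%MS))^t* *m W').
  exact: glue_unitary (schmidt_resolution Y) RT W'W' RTW'.
rewrite mulmxDr !(mulmxA Y) (mulmxA (Y *m R^t*)) schmidt_proj YTZ YW.
by rewrite mul0mx addr0.
Qed.

End UnitaryFreedom.

Section GenericBasis.
Variable C : numClosedFieldType.

Definition ones_mx n : 'M[C]_n := const_mx 1.

Lemma ones_mx_sqr n : ones_mx n *m ones_mx n = n%:R *: ones_mx n.
Proof.
apply/matrixP => i j; rewrite !mxE (eq_bigr (fun _ => 1)) => [|k _]; last first.
  by rewrite !mxE mulr1.
by rewrite sumr_const card_ord mulr1.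
Qed.

Lemma mul_id_sub_ones n (a b : C) :
  (1%:M - a *: ones_mx n) *m (1%:M - b *: ones_mx n) =
  1%:M - (a + b - a * b * n%:R) *: ones_mx n.
Proof.
rewrite mulmxBl !mulmxBr mul1mx mulmx1 -!scalemxAl -!scalemxAr mul1mx.
rewrite ones_mx_sqr !scalerA !scalerDl scaleNr !opprD !opprK !addrA.
by congr (_ + _); rewrite addrAC.
Qed.

Lemma rect_neq0 (a b : C) : a \is Num.real -> b \is Num.real -> b != 0 ->
  a + 'i * b != 0.
Proof.
move=> ar br; apply: contra => /eqP ab0; apply/eqP.
by rewrite -(Im_rect ar br) ab0; apply/Creal_ImP/rpred0.
Qed.

(* With c = (1 + i)/n, the matrix 1 - c J is unitary and has no zero entry,
   so no coordinate vector is orthogonal to any of its columns. *)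
Definition spread_coef n : C := (1 + 'i) / n%:R.
Definition spread_mx n : 'M[C]_n := 1%:M - spread_coef n *: ones_mx n.

Lemma spread_mx_unitary n : (0 < n)%N -> (spread_mx n)^t* *m spread_mx n = 1%:M.
Proof.
move=> n0; have nz : n%:R != 0 :> C by rewrite pnatr_eq0 -lt0n.
have -> : (spread_mx n)^t* = 1%:M - (spread_coef n)^* *: ones_mx n.
  apply/matrixP => i j; rewrite !mxE rmorphB /= rmorphM /= conjC1 eq_sym.
  by rewrite rmorph_nat.
rewrite mul_id_sub_ones /spread_coef rmorphM /= fmorphV /= conjC_nat.
rewrite rmorphD /= conjC1 conjCi -mulrDl mulrA mulfVK // mulrAC -mulrBl.
have -> : (1 - 'i) * (1 + 'i) = 2%:R :> C.
  by rewrite -subr_sqr expr1n sqrCi opprK.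
by rewrite addrACA addNr addr0 subrr mul0r scale0r subr0.
Qed.

Lemma spread_mx_neq0 n (j m : 'I_n) : spread_mx n j m != 0.
Proof.
have nz : n%:R != 0 :> C by rewrite pnatr_eq0 -lt0n; case: n j m => [[]|].
have -> : spread_mx n j m = ((j == m)%:R - n%:R^-1) + 'i * (- n%:R^-1).
  rewrite !mxE mulr1 /spread_coef mulrDl mul1r mulrN opprD addrA.
  by congr (_ - _).
apply: rect_neq0; first by rewrite rpredB ?rpredV ?realn.
  by rewrite rpredN rpredV realn.
by rewrite oppr_eq0 invr_eq0.
Qed.

(* The points (1 - i k)/(1 + i k), k : nat, are pairwise distinct points of
   the unit circle. *)
Definition circle_den (k : nat) : C := 1 + 'i * k%:R.
Definition circle_pt (k : nat) : C := 2%:R / circle_den k - 1.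

Lemma circle_den_neq0 k : circle_den k != 0.
Proof.
apply: contraTneq isT => h.
have := Re_rect (@realn C 1) (@realn C k); rewrite -/(circle_den k) h.
by rewrite (Creal_ReP _ (rpred0 _)) => /eqP; rewrite eq_sym oner_eq0.
Qed.

Lemma circle_ptE k : circle_pt k = (circle_den k)^* / circle_den k.
Proof.
rewrite /circle_pt -[X in _ - X](divff (circle_den_neq0 k)) -mulrBl.
congr (_ / _); rewrite /circle_den rmorphD /= conjC1 rmorphM /= conjCi.
by rewrite conjC_nat mulNr opprD addrA -[2%:R]/(1 + 1 : C) addrK.
Qed.

Lemma circle_pt_unit k : (circle_pt k)^* * circle_pt k = 1.
Proof.
have d0 := circle_den_neq0 k.
have d0c : (circle_den k)^* != 0 by rewrite conjC_eq0.
by rewrite circle_ptE rmorphM /= fmorphV /= conjCK mulrA mulfVK // divff.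
Qed.

Lemma circle_pt_inj : injective circle_pt.
Proof.
move=> a b; rewrite /circle_pt => /addIr.
have two0 : (2%:R : C) != 0 by rewrite pnatr_eq0.
move=> /(mulfI two0) /invr_inj /addrI /(mulfI (neq0Ci C)) /eqP.
by rewrite eqr_nat => /eqP.
Qed.

Lemma exists_unit_nonroot (Q : {poly C}) : Q != 0 ->
  exists z : C, z^* * z = 1 /\ ~~ root Q z.
Proof.
move=> Q0; set pts := [seq circle_pt k | k <- iota 0 (size Q)].
case: (boolP (all (root Q) pts)) => [allroot|]; last first.
  by case/allPn => z /mapP [k _ ->] nr; exists (circle_pt k); rewrite circle_pt_unit.
have := max_poly_roots Q0 allroot.
rewrite map_inj_uniq ?iota_uniq //; last exact: circle_pt_inj.
by rewrite size_map size_iota ltnn => /(_ isT).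
Qed.

(* Take
   E = D (1 - c J) with D = diag(conj z^j): the m-th coordinate of v_l is a
   polynomial in z, nonzero as 1 - c J has no zero entry, and z on the unit
   circle is chosen outside the roots of all these polynomials. *)
Lemma generic_onb M L (v : 'I_L -> 'cV[C]_M) : exists E : 'M[C]_M,
  E^t* *m E = 1%:M /\ forall l (m : 'I_M), (E^t* *m v l) m 0 = 0 -> v l = 0.
Proof.
case: M v => [|M'] v.
  by exists 1%:M; split; [apply/matrixP => [[]] | move=> l []].
set M := M'.+1.
pose coord_poly (p : 'I_L * 'I_M) : {poly C} :=
  \sum_(j < M) (((spread_mx M j p.2)^* * v p.1 j 0) *: 'X^j).
have coord_poly_neq0 p : v p.1 != 0 -> coord_poly p != 0.
  move=> vn0; have [j vj] : exists j, v p.1 j 0 != 0.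
    apply/existsP; apply: contraR vn0; rewrite negb_exists => /forallP h.
    by apply/eqP/matrixP => i k; rewrite ord1 mxE; apply/eqP/negPn.
  apply/negP => /eqP /(congr1 (fun q : {poly C} => q`_j)) /=.
  rewrite coef_sum coef0 (bigD1 j) //= big1 ?addr0 => [|i ij]; last first.
    by rewrite coefZ coefXn (_ : (j == i :> nat) = false) ?mulr0 // eq_sym; apply/negbTE.
  rewrite coefZ coefXn eqxx mulr1 => /eqP; apply/negP.
  by rewrite mulf_neq0 // conjC_eq0 spread_mx_neq0.
pose Q := \prod_(p | v p.1 != 0) coord_poly p.
have Q0 : Q != 0 by apply/prodf_neq0 => p; apply: coord_poly_neq0.
have [z [zu Qz]] := exists_unit_nonroot Q0.
have coord_poly_z p : v p.1 != 0 -> (coord_poly p).[z] != 0.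
  move: Qz; rewrite /root /Q horner_prod prodf_seq_neq0 => /allP h vn0.
  by have := h p (mem_index_enum _); rewrite vn0.
pose D : 'M[C]_M := diag_mx (\row_j (z^*) ^+ j).
exists (D *m spread_mx M); split.
  have DD : D^t* *m D = 1%:M.
    rewrite /D tr_diag_mx map_diag_mx mulmx_diag -diag_const_mx; congr diag_mx.
    apply/rowP => j; rewrite !mxE rmorphXn /= conjCK -exprMn.
    by rewrite mulrC zu expr1n.
  by rewrite adjmxM -mulmxA (mulmxA (D^t*)) DD mul1mx spread_mx_unitary.
move=> l m h; apply/eqP; apply: contraLR isT => vn0.
have := coord_poly_z (l, m) vn0; apply: contraNN => _; apply/eqP; rewrite -[RHS]h.
rewrite horner_sum !mxE; apply: eq_bigr => j _.
rewrite hornerZ hornerXn /D mul_diag_mx !mxE rmorphM rmorphXn /= conjCK.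
by rewrite mulrC mulrA.
Qed.

End GenericBasis.

Section Decompositions.
Variable C : numClosedFieldType.

Lemma tensv_dotE M N (a : 'cV[C]_M) (b : 'cV[C]_N) (u : 'cV[C]_(M * N)) :
  (tensv a b)^t* *m u = a^t* *m vec_mx u^T *m (b^t*)^T.
Proof.
rewrite -mxvec_dotmul vec_mxK trmxK /tensv trmxK map_mxvec map_mxM.
by rewrite map_trmx trmxK.
Qed.

Lemma dot_tens M N (a c : 'cV[C]_M) (b d : 'cV[C]_N) :
  ((tensv a b)^t* *m tensv c d) 0 0 = (a^t* *m c) 0 0 * (b^t* *m d) 0 0.
Proof.
rewrite tensv_dotE /tensv trmxK mxvecK mulmxA -mulmxA -trmx_mul.
by rewrite [LHS]mxE big_ord1 [_^T _ _]mxE.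
Qed.

(* Indeed
   these inner products are the entries of E^t* U conj(F), U the matrix of
   the vector. *)
Lemma tens_ext M N (E : 'M[C]_M) (F : 'M[C]_N) (u v : 'cV[C]_(M * N)) :
  E *m E^t* = 1%:M -> F *m F^t* = 1%:M ->
  (forall m n, ((tensv (col m E) (col n F))^t* *m u) 0 0 =
               ((tensv (col m E) (col n F))^t* *m v) 0 0) -> u = v.
Proof.
move=> EE FF same.
have coords (x : 'cV[C]_(M * N)) m n :
    (E^t* *m vec_mx x^T *m (F^t*)^T) m n =
    ((tensv (col m E) (col n F))^t* *m x) 0 0.
  by rewrite -row_col_entry row_mul row_adj -tr_row row_adj -tensv_dotE.
have Ecancel (X : 'M[C]_(M, N)) : E *m (E^t* *m X *m (F^t*)^T) *m F^T = X.
  by rewrite !mulmxA EE mul1mx -mulmxA -trmx_mul FF trmx1 mulmx1.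
have UV : vec_mx u^T = vec_mx v^T.
  rewrite -(Ecancel (vec_mx u^T)) -(Ecancel (vec_mx v^T)); congr (_ *m _ *m _).
  by apply/matrixP => m n; rewrite !coords same.
by rewrite -[u]trmxK -[v]trmxK -[u^T]vec_mxK -[v^T]vec_mxK UV.
Qed.

Definition decomp_mx d K (Phi : 'I_K -> 'cV[C]_d) : 'M[C]_(d, K) :=
  \matrix_(i, l) Phi l i 0.

Lemma decomp_mxE d K (Phi : 'I_K -> 'cV[C]_d) :
  \sum_(l < K) proj1 (Phi l) = decomp_mx Phi *m (decomp_mx Phi)^t*.
Proof.
apply/matrixP => i j; rewrite summxE !mxE; apply: eq_bigr => l _.
by rewrite !mxE big_ord1 !mxE.
Qed.

Lemma decomp_mx_col d K (B : 'M[C]_(d, K)) : decomp_mx (fun l => col l B) = B.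
Proof. by apply/matrixP => i j; rewrite !mxE. Qed.

Lemma gramvE M N K (Phi : 'I_K -> 'cV[C]_(M * N)) E F m n :
  gramv Phi E F m n = (decomp_mx Phi)^t* *m tensv (col m E) (col n F).
Proof.
apply/matrixP => l j; rewrite ord1 !mxE; apply: eq_bigr => i _.
by rewrite !mxE.
Qed.

End Decompositions.

Section Separability.
Variable C : numClosedFieldType.

(* Choose E generic for the local vectors phi_l.  Any
   decomposition Phi has the Gram matrix rho of the product decomposition
   Psi_l = phi_l (x) psi_l, so decomp_mx Phi = decomp_mx Psi U for a unitary
   U and w''_mn(Phi) = U^t* w''_mn(Psi), whose l-th entry is a_lm b_ln with
   a_lm = <phi_l|e_m>, b_ln = <psi_l|f_n>.  Hence M_mk = U^t* D_mk U with
   D_mk = diag(a_lm / a_lk) (or 1 where a_lk = 0, i.e. phi_l = 0). *)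
Lemma separable_commuting_normal M N K (rho : 'M[C]_(M * N)) (F : 'M[C]_N) :
  K_separable K rho -> exists E : 'M[C]_M, is_onb E /\
    forall Phi : 'I_K -> 'cV[C]_(M * N), is_decomp rho Phi ->
      commuting_normal_cond Phi E F.
Proof.
case=> phi [psi rhoE]; have [E [EE Egeneric]] := generic_onb phi.
exists E; split=> // Phi rhoPhi.
pose Psi l := tensv (phi l) (psi l).
have G : decomp_mx Psi *m (decomp_mx Psi)^t* = decomp_mx Phi *m (decomp_mx Phi)^t*.
  by rewrite -!decomp_mxE -rhoE -rhoPhi.
have [U Uu PsiU] := unitary_freedom G; have UU := unitarymxP Uu.
pose a l m := ((phi l)^t* *m col m E) 0 0.
pose b l n := ((psi l)^t* *m col n F) 0 0.
have wPhi m n : gramv Phi E F m n = U^t* *m \col_l (a l m * b l n).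
  rewrite !gramvE -PsiU adjmxM -mulmxA -gramvE; congr (_ *m _).
  by apply/colP => l; rewrite [LHS]mxE [RHS]mxE; exact: dot_tens.
have a0 l k : a l k = 0 -> forall m, a l m = 0.
  move=> alk0 m; suff phil0 : phi l = 0 by rewrite /a phil0 adjmx0 mul0mx mxE.
  by apply: (Egeneric l k); rewrite adj_col_entry -dot_conj -/(a l k) alk0 conjC0.
pose D m k : 'M[C]_K := diag_mx (\row_l (if a l k == 0 then 1 else a l m / a l k)).
have UDU A B : (U^t* *m A *m U) *m (U^t* *m B *m U) = U^t* *m (A *m B) *m U.
  by rewrite -!mulmxA (mulmxA U) UU mul1mx.
have adjUDU A : (U^t* *m A *m U)^t* = U^t* *m A^t* *m U.
  by rewrite !adjmxM trmxCK mulmxA.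
exists (fun m k => U^t* *m D m k *m U); split.
- by move=> m k /=; rewrite /adjmx adjUDU !UDU tr_diag_mx map_diag_mx diag_mxC.
- by move=> m k m' k'; rewrite !UDU diag_mxC.
move=> m k n; rewrite !wPhi -!mulmxA (mulmxA U) UU mul1mx; congr (_ *m _).
rewrite /D mul_diag_mx; apply/colP => l; rewrite !mxE.
case: eqP => [alk0|/eqP alk]; first by rewrite alk0 (a0 _ _ alk0 m) !mul0r mulr0.
by rewrite mulrA mulfVK.
Qed.


(* Simultaneously diagonalize the M_mk by a unitary P and
   rotate the decomposition: B := decomp_mx Phi P^t* still decomposes rho,
   and its Gram vectors w_mn = P w''_mn satisfy d^mk_l w_kn^l = w_mn^l for
   the diagonal entries d^mk_l of P M_mk P^t*.  Fixing k = m0, the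
   coordinates of the l-th column of B along e_m (x) f_n factor as
   conj(d^(m m0)_l) conj(w_(m0 n)^l): this column is a product vector. *)
Lemma commuting_normal_separable M N K (rho : 'M[C]_(M * N)) (F : 'M[C]_N) :
  (0 < M)%N -> is_onb F ->
  (exists (E : 'M[C]_M) (Phi : 'I_K -> 'cV[C]_(M * N)),
       [/\ is_onb E, is_decomp rho Phi & commuting_normal_cond Phi E F]) ->
  K_separable K rho.
Proof.
move=> M0 FF [E [Phi [EE rhoPhi [Mx [Mnormal Mcomm Mw]]]]].
pose As := [seq Mx p.1 p.2 | p <- enum [set: 'I_M * 'I_M]].
have memAs A : A \in As -> exists m k, A = Mx m k.
  by case/mapP => p _ ->; exists p.1, p.2.
have [P Pu Pdiag] : exists2 P : 'M[C]_K, P \is unitarymx &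
    {in As, forall A, is_diag_mx (P *m A *m P^t*)}.
  apply: simultaneous_unitary_diag.
    by move=> A B /memAs [m [k ->]] /memAs [m' [k' ->]]; apply: Mcomm.
  by move=> A /memAs [m [k ->]]; apply: Mnormal.
pose d m k := P *m Mx m k *m P^t*.
have d_diag m k : is_diag_mx (d m k).
  by apply: Pdiag; apply/mapP; exists (m, k); rewrite ?mem_enum ?inE.
have PtP := unitarymx_tK Pu.
pose B := decomp_mx Phi *m P^t*.
pose w m n := B^t* *m tensv (col m E) (col n F).
have dw l m k n : d m k l l * w k n l 0 = w m n l 0.
  have -> : w m n = d m k *m w k n.
    rewrite /w /d /B adjmxM trmxCK -!mulmxA -!gramvE (mulmxA (P^t*)) PtP.
    by rewrite mul1mx Mw.
  rewrite [RHS]mxE (bigD1 l) //= big1 ?addr0 // => j jl.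
  by have /is_diag_mxP -> := d_diag m k; rewrite ?mul0r // eq_sym.
pose m0 := Ordinal M0.
exists (fun l => E *m \col_m (d m m0 l l)^*), (fun l => F *m \col_n (w m0 n l 0)^*).
have -> : rho = B *m B^t*.
  by rewrite rhoPhi decomp_mxE /B adjmxM trmxCK mulmxA -(mulmxA _ (P^t*)) PtP mulmx1.
rewrite -[in LHS](decomp_mx_col B) -decomp_mxE; apply: eq_bigr => l _; congr proj1.
apply: (tens_ext (mulmx1C EE) (mulmx1C FF)) => m n.
rewrite dot_tens !onb_coord // [(\col__ _) m 0]mxE [(\col__ _) n 0]mxE.
by rewrite -rmorphM /= dw /w (adj_col_entry B) dot_conj.
Qed.

End Separability.

Close Scope sesquilinear_scope.
Unset Implicit Arguments.

Theorem theorem3 (C : numClosedFieldType) (M N K : nat)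
  (rho : 'M[C]_(M * N)) (F : 'M[C]_N) :
  is_state rho -> is_onb F -> (0 < K)%N ->
  (exists Phi : 'I_K -> 'cV[C]_(M * N), is_decomp rho Phi) ->
  (K_separable K rho <->
     exists E : 'M[C]_M, is_onb E /\
       forall Phi : 'I_K -> 'cV[C]_(M * N), is_decomp rho Phi ->
         commuting_normal_cond Phi E F)
  /\
  ((exists E : 'M[C]_M, is_onb E /\
       forall Phi : 'I_K -> 'cV[C]_(M * N), is_decomp rho Phi ->
         commuting_normal_cond Phi E F) <->
   (exists (E : 'M[C]_M) (Phi : 'I_K -> 'cV[C]_(M * N)),
       [/\ is_onb E, is_decomp rho Phi & commuting_normal_cond Phi E F])).
Proof.
move=> rho_state F_onb _ [Phi0 rhoPhi0].
(* a state has trace 1, so the first factor is not trivial *)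
have M0 : (0 < M)%N.
  case: M rho rho_state Phi0 rhoPhi0 => // rho [_ _].
  by rewrite /mxtrace big_ord0 => /eqP; rewrite eq_sym oner_eq0.
have a_b := @separable_commuting_normal C M N K rho F.
have c_a := @commuting_normal_separable C M N K rho F M0 F_onb.
have b_c : (exists E : 'M[C]_M, is_onb E /\
       forall Phi : 'I_K -> 'cV[C]_(M * N), is_decomp rho Phi ->
         commuting_normal_cond Phi E F) ->
   exists (E : 'M[C]_M) (Phi : 'I_K -> 'cV[C]_(M * N)),
       [/\ is_onb E, is_decomp rho Phi & commuting_normal_cond Phi E F].
  by case=> E [E_onb condE]; exists E, Phi0; split=> //; apply: condE.
split; split.
- exact: a_b.
- by move/b_c/c_a.
- exact: b_c.
- by move/c_a/a_b.
Qed.
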